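(* Let $(G,L)$ be an instance of the List-$k$-Coloring Problem such that $|L(v)|\neq 1$ for every $v\in V(G)$ and $G$ has no $L$-good $P_3$. If $G$ admits a frugal $L$-coloring $\phi$, then for every vertex $v\in V(G)$, the vertices of $N_{G^L}[v]$ receive pairwise distinct colors under $\phi$; in particular $|N_{G^L}(v)|<k$.
   Context: Graphs are finite and simple; $[k]=\{1,\dots,k\}$. A $k$-list-assignment of $G$ is a map $L:V(G)\to 2^{[k]}$; an instance of the List-$k$-Coloring Problem is a pair $(G,L)$. An $L$-coloring of $G$ is a map $\phi:V(G)\to[k]$ with $\phi(u)\ne\phi(v)$ for every edge $uv$ and $\phi(v)\in L(v)$ for all $v$. An $L$-coloring $\phi$ is frugal if for every $v\in V(G)$ and every $i\in L(v)$, $v$ has at most one neighbour $u$ with $\phi(u)=i$. An induced $P_3$ in $G$, written $x_1-x_2-x_3$, consists of distinct vertices with $x_1x_2,x_2x_3\in E(G)$ and $x_1x_3\notin E(G)$; it is $L$-good if $|L(x_1)|,|L(x_2)|,|L(x_3)|\ge 2$ and $L(x_1)\cap L(x_2)$, $L(x_1)\cap L(x_3)$, $L(x_2)\cap L(x_3)$ are all nonempty. $G^L$ is the graph with vertex set $V(G)$ whose edges are the edges $uv\in E(G)$ with $L(u)\cap L(v)\neq\emptyset$. $N_{G^L}(v)$ is the set of neighbours of $v$ in $G^L$ and $N_{G^L}[v]=N_{G^L}(v)\cup\{v\}$. *)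

(* A simple graph: symmetric irreflexive relation e on a finType T.
   Colors [k] = {1..k} are represented by 'I_k = {0..k-1} (a relabelling). *)
From mathcomp Require Import all_boot.
Set Implicit Arguments. Unset Strict Implicit. Unset Printing Implicit Defensive.

Definition simple_graph (T : finType) (e : rel T) : Prop :=
  symmetric e /\ irreflexive e.

Definition Lcoloring (T : finType) (k : nat) (e : rel T)
  (L : T -> {set 'I_k}) (phi : T -> 'I_k) : Prop :=
  (forall u v, e u v -> phi u != phi v) /\ (forall v, phi v \in L v).

Definition frugal (T : finType) (k : nat) (e : rel T)
  (L : T -> {set 'I_k}) (phi : T -> 'I_k) : Prop :=
  Lcoloring e L phi /\
  forall v i, i \in L v -> #|[set u | e v u & phi u == i]| <= 1.

Definition induced_P3 (T : finType) (e : rel T) (x1 x2 x3 : T) : Prop :=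
  [/\ x1 != x2, x2 != x3, x1 != x3 & [/\ e x1 x2, e x2 x3 & ~~ e x1 x3]].

Definition L_good_P3 (T : finType) (k : nat) (e : rel T)
  (L : T -> {set 'I_k}) (x1 x2 x3 : T) : Prop :=
  induced_P3 e x1 x2 x3 /\
  [/\ 2 <= #|L x1|, 2 <= #|L x2|, 2 <= #|L x3| &
      [/\ L x1 :&: L x2 != set0, L x1 :&: L x3 != set0 & L x2 :&: L x3 != set0]].

Definition GL_edge (T : finType) (k : nat) (e : rel T)
  (L : T -> {set 'I_k}) (u v : T) : bool :=
  e u v && (L u :&: L v != set0).

Definition N_GL (T : finType) (k : nat) (e : rel T)
  (L : T -> {set 'I_k}) (v : T) : {set T} :=
  [set u | GL_edge e L v u].

Definition N_GL_closed (T : finType) (k : nat) (e : rel T)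
  (L : T -> {set 'I_k}) (v : T) : {set T} :=
  v |: N_GL e L v.

From mathcomp Require Import all_boot.

(* Let phi be an L-coloring and let x, y be two distinct
   G^L-neighbours of v with phi x = phi y.  Then x and y are not adjacent
   (phi is proper), so x - v - y is an induced P3.  Each of the three lists
   meets another one, hence is nonempty, hence (lists never have size 1) has
   at least two colors; and L x, L y both contain the common color phi x.
   So x - v - y is L-good, which is excluded.  Since v itself is colored
   differently from all its neighbours, phi is injective on N_{G^L}[v].
   Injectivity into 'I_k bounds |N_{G^L}[v]| = |N_{G^L}(v)| + 1 by k. *)

Set Implicit Arguments.
Unset Strict Implicit.
Unset Printing Implicit Defensive.

Lemma card_ge2_of_meet (A : finType) (X Y : {set A}) :
  #|X| != 1 -> X :&: Y != set0 -> 2 <= #|X|.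
Proof.
move=> X_ne1 /set0Pn [c]; rewrite inE => /andP [cX _].
have : 0 < #|X| by apply/card_gt0P; exists c.
by move: X_ne1; case: #|X| => [|[|n]].
Qed.

Section ClosedNeighbourhood.

Variables (T : finType) (e : rel T) (k : nat).
Variables (L : T -> {set 'I_k}) (phi : T -> 'I_k).
Hypothesis e_sym : symmetric e.
Hypothesis e_irr : irreflexive e.
Hypothesis L_ne1 : forall v, #|L v| != 1.
Hypothesis no_good_P3 : forall x1 x2 x3, ~ L_good_P3 e L x1 x2 x3.
Hypothesis phi_col : Lcoloring e L phi.

Lemma edge_neq (u w : T) : e u w -> u != w.
Proof. by apply: contraTneq => ->; rewrite e_irr. Qed.

Lemma GL_nbrs_same_color_good (v x y : T) :
  GL_edge e L v x -> GL_edge e L v y -> x != y -> phi x = phi y ->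
  L_good_P3 e L x v y.
Proof.
case: phi_col => proper in_list.
move=> /andP [evx Lvx] /andP [evy Lvy] nxy phixy.
have nexy : ~~ e x y.
  by apply/negP => /proper; rewrite phixy eqxx.
have Lxy : L x :&: L y != set0.
  by apply/set0Pn; exists (phi x); rewrite inE in_list phixy in_list.
have Lxv : L x :&: L v != set0 by rewrite setIC.
have Lyv : L y :&: L v != set0 by rewrite setIC.
split.
  split; rewrite ?(nxy, nexy) //.
  - by rewrite eq_sym edge_neq.
  - exact: edge_neq.
  - by rewrite e_sym evx evy.
by split; [exact: card_ge2_of_meet Lxv | exact: card_ge2_of_meet Lvx
          | exact: card_ge2_of_meet Lyv | split].
Qed.

Lemma closed_nbhd_rainbow (v : T) :
  {in N_GL_closed e L v &, injective phi}.
Proof.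
case: (phi_col) => proper _.
have nbr_vs_v x : GL_edge e L v x -> phi x = phi v -> False.
  by case/andP => /proper + _ phixv; rewrite phixv eqxx.
move=> x y; rewrite !inE => /predU1P [-> | vx] /predU1P [-> | vy] // phixy.
- by case: (nbr_vs_v y vy).
- by case: (nbr_vs_v x vx).
case: (eqVneq x y) => // nxy.
by case: (no_good_P3 (GL_nbrs_same_color_good vx vy nxy phixy)).
Qed.

End ClosedNeighbourhood.

Lemma card_lt_of_inj_setU1 (T : finType) (k : nat) (f : T -> 'I_k)
  (v : T) (N : {set T}) :
  v \notin N -> {in v |: N &, injective f} -> #|N| < k.
Proof.
move=> vN f_inj.
have : #|v |: N| <= k.
  by rewrite -(card_in_imset f_inj); apply: leq_trans (max_card _) _;
     rewrite card_ord.
by rewrite cardsU1 vN.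
Qed.

Theorem lemma4p1 (T : finType) (e : rel T) (k : nat)
  (L : T -> {set 'I_k}) (phi : T -> 'I_k) :
  simple_graph e ->
  (forall v, #|L v| != 1) ->
  (forall x1 x2 x3, ~ L_good_P3 e L x1 x2 x3) ->
  frugal e L phi ->
  forall v : T,
    {in N_GL_closed e L v &, injective phi} /\ #|N_GL e L v| < k.
Proof.
move=> [e_sym e_irr] L_ne1 no_good [phi_col _] v.
have rainbow := closed_nbhd_rainbow e_sym e_irr L_ne1 no_good phi_col (v:=v).
split=> //.
apply: card_lt_of_inj_setU1 rainbow.
by rewrite inE /GL_edge e_irr.
Qed.
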